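(* Let $G$ be a connected (claw, bull)-free graph with $\ell(G)\le 3$ and $\alpha(G)\ge 3$. Then: (1) $\mathrm{diam}(G)\ge 4$; and (2) $G$ is an expansion of a path.
   Context: A claw is a graph isomorphic to $K_{1,3}$; a bull is the graph obtained from a triangle by adding two pendant edges at two different vertices. A graph is (claw, bull)-free if it has no induced claw and no induced bull. $\ell(G)$ is the length of a longest induced cycle in $G$; $\ell(G)\le 3$ means $G$ has no induced cycle of length at least $4$. $\alpha(G)$ is the independence number and $\mathrm{diam}(G)$ the diameter. An expansion of a graph $F$ with vertex set $\{v_1,\dots,v_n\}$ is any graph obtained from $F$ by replacing each vertex $v_i$ by a nonempty clique $K^{[i]}$, the cliques being pairwise vertex-disjoint, and adding all edges between $V(K^{[i]})$ and $V(K^{[j]})$ whenever $v_iv_j\in E(F)$ (and no other edges between different cliques). *)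

From mathcomp Require Import all_boot.
Set Implicit Arguments. Unset Strict Implicit. Unset Printing Implicit Defensive.

Section Graphs.
Variable T : finType.
Variable adj : rel T.

Definition simple_graph := symmetric adj /\ irreflexive adj.

Definition connected_graph := forall x y : T, connect adj x y.

Definition induced_sub (H : finType) (h : rel H) :=
  exists f : H -> T, injective f /\ forall u v : H, adj (f u) (f v) = h u v.

Definition stable (S : {set T}) :=
  [forall x in S, forall y in S, ~~ adj x y].

Definition alpha := \max_(S : {set T} | stable S) #|S|.

Definition ball (k : nat) (x : T) : {set T} :=
  iter k (fun S => S :|: [set y | [exists z in S, adj z y]]) [set x].

(* distance: least k with y in ball k x (equals #|T| if unreachable) *)
Definition dist (x y : T) : nat := find (fun k => y \in ball k x) (iota 0 #|T|).

Definition diam := \max_(x : T) \max_(y : T) dist x y.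

(* G is an expansion of F (F given by h : rel F): vertex v_i of F is
   replaced by the nonempty clique f^-1(v_i). *)
Definition expansion_of (F : finType) (h : rel F) :=
  exists f : T -> F, (forall v : F, exists x : T, f x = v) /\
    forall x y : T, adj x y = (x != y) && ((f x == f y) || h (f x) (f y)).

End Graphs.

Definition claw_rel : rel 'I_4 :=
  fun u v => (u != v) && ((nat_of_ord u == 0) || (nat_of_ord v == 0)).

Definition bull_edge (a b : nat) : bool :=
  [|| (a == 0) && (b == 1), (a == 0) && (b == 2), (a == 1) && (b == 2),
      (a == 0) && (b == 3) | (a == 1) && (b == 4)].
Definition bull_rel : rel 'I_5 :=
  fun u v => bull_edge u v || bull_edge v u.

Definition cycle_rel (k : nat) : rel 'I_k :=
  fun u v => (u.+1 %% k == v) || (v.+1 %% k == u).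

Definition path_rel (n : nat) : rel 'I_n :=
  fun u v => (u.+1 == v :> nat) || (v.+1 == u :> nat).

Definition claw_free (T : finType) (adj : rel T) := ~ @induced_sub T adj _ claw_rel.
Definition bull_free (T : finType) (adj : rel T) := ~ @induced_sub T adj _ bull_rel.

Definition longest_induced_cycle_le3 (T : finType) (adj : rel T) :=
  forall k, 4 <= k -> ~ @induced_sub T adj _ (@cycle_rel k).

From mathcomp Require Import all_boot zify.
Set Implicit Arguments. Unset Strict Implicit. Unset Printing Implicit Defensive.

(* Fix any vertex u. Among the vertices farthest from u, one with the smallest
   closed neighbourhood is simplicial: two non-adjacent neighbours of it would
   yield a claw, a bull, a hole, or a farthest vertex whose closed
   neighbourhood is strictly smaller. Seen from a simplicial vertex v, every
   distance layer L_k is a clique and, for k >= 2, L_k is complete to L_(k+1),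
   again by excluding claws, bulls and holes. A stable set of size three does
   not fit into L_0, ..., L_3, so L_4 is nonempty and diam >= 4; with the help
   of L_4, every vertex of L_1 that is not a true twin of v is complete to L_2.
   Hence the twins of v, the rest of L_1, and L_2, L_3, ... are the cliques of
   an expansion of a path. Most uses of hole-freeness go through one fact: an
   induced path joining two vertices of a layer and otherwise lying above that
   layer closes, through the layers below, into an induced cycle of length at
   least four. *)

Lemma cycle_adjE N i j : i < N -> j < N ->
  (i.+1 %% N == j) || (j.+1 %% N == i) =
  [|| i.+1 == j, j.+1 == i, (i.+1 == N) && (j == 0) | (j.+1 == N) && (i == 0)].
Proof.
move=> iN jN; have modS k : k < N -> k.+1 %% N = if k.+1 == N then 0 else k.+1.
  by move=> kN; case: eqP => [->|?]; rewrite ?modnn // modn_small //; lia.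
by rewrite !modS //; do 2 case: ifP => /eqP; lia.
Qed.

Section InducedPaths.
Variables (T : finType) (e : rel T).
Hypotheses (e_sym : symmetric e) (e_irr : irreflexive e).

Definition induced_path (f : nat -> T) (n : nat) :=
  forall i j, i <= n -> j <= n ->
    (f i == f j) = (i == j) /\ e (f i) (f j) = (i.+1 == j) || (j.+1 == i).

Definition walk (f : nat -> T) (n : nat) := forall t, t < n -> e (f t) (f t.+1).

Lemma walk_shortcut f n i d : walk f n -> i + d <= n ->
  (i + d < n -> e (f i) (f (i + d).+1)) ->
  walk (fun t => if t <= i then f t else f (t + d)) (n - d).
Proof.
move=> wf idn jump t tnd; case: (ltngtP t i) => [ti|it|ti]; last subst t.
- by apply: wf; lia.
- by rewrite addSn; apply: wf; lia.
- by rewrite addSn; apply: jump; lia.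
Qed.

Lemma chordless_walk_induced f n : walk f n ->
  (forall i j, i < j <= n -> f i != f j /\ (i.+1 < j -> ~~ e (f i) (f j))) ->
  induced_path f n.
Proof.
move=> wf chordless i j; wlog ij : i j / i <= j => [hwlog i_n j_n|i_n j_n].
  case: (leqP i j) => [/hwlog|/ltnW/hwlog]; first exact.
  by rewrite eq_sym e_sym => /(_ j_n i_n)[-> ->]; rewrite eq_sym orbC.
case: (ltngtP i j) ij => // [i_lt_j _|->]; last by rewrite eqxx e_irr; lia.
have [/negbTE -> no_chord] := chordless i j (ltac:(by rewrite i_lt_j)).
split; first by lia.
case: (ltngtP i.+1 j) => [i1j|ji|ij]; first by rewrite (negbTE (no_chord i1j)); lia.
  by lia.
by rewrite -ij; apply: wf; rewrite ij.
Qed.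

(* Induction on the length: a repeated vertex or a chord yields a shorter walk. *)
Lemma walk_induced_path f n : walk f n ->
  exists m g, [/\ g 0 = f 0, g m = f n & induced_path g m].
Proof.
elim: n.+1 {-2}n (ltnSn n) f => // N IHN {}n nN {}f wf.
have shorter d g : walk g (n - d) -> 0 < d <= n -> g 0 = f 0 -> g (n - d) = f n ->
    exists m g', [/\ g' 0 = f 0, g' m = f n & induced_path g' m].
  by move=> wg dn <- <-; apply: IHN wg; lia.
have [|no_chord] := boolP [exists i : 'I_n.+1, exists j : 'I_n.+1,
    (i < j) && ((f i == f j) || (i.+1 < j) && e (f i) (f j))]; last first.
  exists n, f; split=> //; apply: chordless_walk_induced => // i j /andP[ij jn].
  have i_n : i < n.+1 by lia.
  have j_n : j < n.+1 by lia.
  move: no_chord; rewrite negb_exists => /forallP /(_ (Ordinal i_n)).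
  rewrite negb_exists => /forallP /(_ (Ordinal j_n)) /=.
  by rewrite ij negb_or => /andP[-> no_e]; split=> // i1j; move: no_e; rewrite i1j.
case/existsP=> i /existsP[j /andP[ij /orP[/eqP fij|/andP[i1j fij]]]].
  have jn : j <= n by rewrite -ltnS.
  apply: (shorter (j - i) _ (walk_shortcut (i := i) wf _ _)) => //=.
  - by lia.
  - by rewrite fij (_ : i + (j - i) = j); [exact: wf | lia].
  - by lia.
  - case: ifP => cut_n; last by congr f; lia.
    by rewrite (_ : n - (j - i) = i) ?fij; [congr f|]; lia.
have jn : j <= n by rewrite -ltnS.
apply: (shorter (j - i).-1 _ (walk_shortcut (i := i) wf _ _)) => //=.
- by lia.
- by rewrite (_ : (i + (j - i).-1).+1 = j) //; lia.
- by lia.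
- by case: ifP => cut_n; congr f; lia.
Qed.

Lemma connect_induced_path x y : connect e x y ->
  exists n f, [/\ f 0 = x, f n = y & induced_path f n].
Proof.
case/connectP=> p xp ->.
have [m [g [g0 gm ind_g]]] := walk_induced_path (pathP x xp).
by exists m, g; split; rewrite // gm (nth_last x (x :: p)).
Qed.

Lemma induced_cycle_glue Q m s n : 2 <= m -> 2 <= n ->
  induced_path Q m -> induced_path s n -> s 0 = Q m -> s n = Q 0 ->
  (forall i k, 0 < i < m -> 0 < k < n -> Q i != s k /\ ~~ e (Q i) (s k)) ->
  induced_sub e (@cycle_rel (m + n)).
Proof.
move=> m2 n2 indQ inds s0 sn inner.
pose g t := if t <= m then Q t else s (t - m).
have gQ t : t <= m -> g t = Q t by rewrite /g => ->.
have gs t : m <= t -> g t = s (t - m).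
  by rewrite /g leq_eqVlt => /orP[/eqP<-|mt]; rewrite ?leqnn ?subnn // leqNgt mt.
have key i j : i <= j < m + n -> (g i == g j) = (i == j) /\
    e (g i) (g j) = [|| i.+1 == j, j.+1 == i, (i.+1 == m + n) && (j == 0)
                      | (j.+1 == m + n) && (i == 0)].
  move=> /andP[ij jN]; case: (leqP j m) => jm.
    rewrite !gQ ?(leq_trans ij jm) //.
    by have [-> ->] := indQ i j (leq_trans ij jm) jm; split; lia.
  case: (leqP m i) => mi.
    rewrite !gs ?(leq_trans mi ij) //.
    by have [-> ->] := inds (i - m) (j - m) (ltac:(lia)) (ltac:(lia)); split; lia.
  rewrite (gs j) ?(ltnW jm) //; case: (posnP i) => [->|i0].
    rewrite gQ // -sn.
    by have [-> ->] := inds n (j - m) (leqnn n) (ltac:(lia)); split; lia.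
  rewrite gQ; last exact: ltnW.
  have [/negbTE-> /negbTE->] := inner i (j - m) (ltac:(lia)) (ltac:(lia)).
  by split; lia.
exists (fun i : 'I_(m + n) => g i); split.
  move=> i j gij; apply/val_inj/eqP; case: (leqP i j) => ij.
    by have [<- _] := key i j (ltac:(by rewrite ij ltn_ord)); rewrite gij.
  rewrite eq_sym; have [<- _] := key j i (ltac:(by rewrite ltnW ?ltn_ord)).
  by rewrite gij.
move=> i j; rewrite /cycle_rel cycle_adjE //; case: (leqP i j) => ij.
  by have [_ ->] := key i j (ltac:(by rewrite ij ltn_ord)).
by rewrite e_sym; have [_ ->] := key j i (ltac:(by rewrite ltnW ?ltn_ord)); lia.
Qed.

End InducedPaths.

Section SimpleGraph.
Variables (T : finType) (adj : rel T).
Hypotheses (adj_sym : symmetric adj) (adj_irr : irreflexive adj).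

(* lia becomes very slow in the presence of many boolean adjacency facts, which
   it cannot use anyway. *)
Ltac lia_dist := repeat match goal with
  | H : is_true (adj _ _) |- _ => clear H
  | H : is_true (~~ adj _ _) |- _ => clear H
  end; lia.

Lemma adj_neq x y : adj x y -> x != y.
Proof. by apply: contraTneq => ->; rewrite adj_irr. Qed.

Lemma adj_nadj_neq z x y : adj z x -> ~~ adj z y -> x != y.
Proof. by move=> zx; apply: contraNneq => <-. Qed.

Lemma induced_sub_nth k (h : rel 'I_k) (s : seq T) x0 :
  symmetric h -> size s = k -> uniq s ->
  (forall i j : 'I_k, i <= j -> adj (nth x0 s i) (nth x0 s j) = h i j) ->
  induced_sub adj h.
Proof.
move=> h_sym size_s uniq_s adj_s; exists (fun i : 'I_k => nth x0 s i); split.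
  by move=> i j /eqP; rewrite nth_uniq ?size_s // => /eqP/val_inj.
move=> i j; case: (leqP i j) => [/adj_s//|/ltnW/adj_s].
by rewrite adj_sym h_sym.
Qed.

Lemma induced_path_nth a s : uniq (a :: s) ->
  (forall i j, i < j <= size s ->
     adj (nth a (a :: s) i) (nth a (a :: s) j) = (i.+1 == j)) ->
  induced_path adj (nth a (a :: s)) (size s).
Proof.
move=> uniq_s adj_s i j i_n j_n; rewrite nth_uniq ?ltnS //; split=> //.
case: (ltngtP i j) => [ij|ji|->]; last by rewrite adj_irr; lia.
  by rewrite adj_s; lia.
by rewrite adj_sym adj_s; lia.
Qed.

Definition adj_on (P : pred T) : rel T := fun a b => [&& P a, P b & adj a b].

Lemma adj_on_sym P : symmetric (adj_on P).
Proof. by move=> a b; rewrite /adj_on adj_sym andbCA. Qed.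

Lemma adj_on_irr P : irreflexive (adj_on P).
Proof. by move=> a; rewrite /adj_on adj_irr !andbF. Qed.

Lemma connect_adj_on_sub (P P' : pred T) x y : (forall z, P z -> P' z) ->
  connect (adj_on P) x y -> connect (adj_on P') x y.
Proof.
move=> PP'; apply: connect_sub => a b /and3P[Pa Pb ab].
by apply: connect1; rewrite /adj_on !PP'.
Qed.

Definition closed_nbr x : {set T} := [set z | (z == x) || adj x z].

Lemma stable_triple : 3 <= alpha adj ->
  exists x y z, [/\ x != y, y != z, z != x & [&& ~~ adj x y, ~~ adj y z & ~~ adj z x]].
Proof.
rewrite /alpha.
have [|S stS ->] := @eq_bigmax_cond _ [pred S | stable adj S] (fun S => #|S|).
  by apply/card_gt0P; exists set0; rewrite inE; apply/forall_inP => x; rewrite inE.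
case/card_gt2P=> x [y [z [[xS yS zS] [xy yz zx]]]].
have st a b : a \in S -> b \in S -> ~~ adj a b.
  by move/forall_inP: stS => st aS bS; move/forall_inP: (st a aS); apply.
by exists x, y, z; rewrite xy yz zx !st.
Qed.

Hypothesis connectedG : connected_graph adj.
Local Notation dist := (dist adj).

Lemma ballS k x :
  ball adj k.+1 x = ball adj k x :|: [set y | [exists z in ball adj k x, adj z y]].
Proof. by []. Qed.

Lemma ball_last x p : path adj x p -> last x p \in ball adj (size p) x.
Proof.
elim/last_ind: p => [|p z IHp]; first by rewrite set11.
rewrite rcons_path last_rcons size_rcons ballS => /andP[/IHp p_x pz].
by rewrite !inE; apply/orP; right; apply/existsP; exists (last x p); rewrite p_x.
Qed.

Lemma has_ball_dist x y : has (fun k => y \in ball adj k x) (iota 0 #|T|).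
Proof.
have /connectP[p xp ->] := connectedG x y; have [p' xp' uniq_p' _] := shortenP xp.
apply/hasP; exists (size p'); last exact: ball_last.
rewrite mem_iota /=; have := max_card (mem (x :: p')).
by rewrite (card_uniqP uniq_p') /= add0n.
Qed.

Lemma dist_ltn x y : dist x y < #|T|.
Proof. by have := has_ball_dist x y; rewrite has_find size_iota. Qed.

Lemma mem_ball_dist x y : y \in ball adj (dist x y) x.
Proof. by have := nth_find 0 (has_ball_dist x y); rewrite nth_iota ?dist_ltn. Qed.

Lemma dist_le_ball x y k : y \in ball adj k x -> dist x y <= k.
Proof.
apply: contraTT; rewrite -ltnNge => lt_k_d; have := before_find 0 lt_k_d.
by rewrite nth_iota ?add0n => [->|]; last exact: ltn_trans (dist_ltn x y).
Qed.

Lemma dist_eq0 x y : (dist x y == 0) = (y == x).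
Proof.
apply/eqP/eqP => [d0|->]; first by have := mem_ball_dist x y; rewrite d0 inE => /eqP.
by apply/eqP; rewrite -leqn0 dist_le_ball ?set11.
Qed.

Lemma dist_le_adj x y z : adj y z -> dist x z <= (dist x y).+1.
Proof.
move=> yz; apply: dist_le_ball; rewrite ballS inE; apply/orP; right.
by rewrite inE; apply/existsP; exists y; rewrite mem_ball_dist.
Qed.

Lemma dist_parent x y k : dist x y = k.+1 -> exists2 z, adj z y & dist x z = k.
Proof.
move=> dy; have := mem_ball_dist x y; rewrite dy ballS inE => /orP[/dist_le_ball|].
  by rewrite dy ltnn.
rewrite inE => /existsP[z /andP[/dist_le_ball zk zy]]; exists z => //.
by have := dist_le_adj x zy; rewrite dy; lia_dist.
Qed.

Lemma dist_adj_close r x y :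
  adj x y -> dist r y <= (dist r x).+1 /\ dist r x <= (dist r y).+1.
Proof. by move=> xy; rewrite !dist_le_adj // adj_sym. Qed.

Lemma dist_gap_nadj r x y :
  (dist r x).+1 < dist r y \/ (dist r y).+1 < dist r x -> ~~ adj x y.
Proof. by move=> gap; apply/negP => /(dist_adj_close r) []; lia_dist. Qed.

Lemma dist_neq r x y : dist r x <> dist r y -> x != y.
Proof. by move=> dxy; apply/eqP => xy; rewrite xy in dxy. Qed.

Lemma dist_eq1 r y : (dist r y == 1) = adj r y.
Proof.
apply/eqP/idP => [/dist_parent[z zy /eqP]|ry]; first by rewrite dist_eq0 => /eqP <-.
have yr : (y == r) = false by rewrite eq_sym; apply/negbTE/adj_neq.
have := dist_le_adj r ry; have := dist_eq0 r y; have := dist_eq0 r r.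
by rewrite eqxx yr; lia_dist.
Qed.

Lemma dist_layer_exists r s k : k <= dist r s -> exists y, dist r y = k.
Proof.
have [n ds] : {n | dist r s = n} by exists (dist r s).
rewrite ds; elim: n s ds => [|n IHn] s ds kn; first by exists s; rewrite ds; lia_dist.
have [->|kn'] := eqVneq k n.+1; first by exists s.
by have [z _ dz] := dist_parent ds; apply: (IHn z dz); lia_dist.
Qed.

Lemma connect_down r x :
  connect (adj_on [pred w | (dist r w < dist r x) || (w == x)]) x r.
Proof.
have [k dx] : {k | dist r x = k} by exists (dist r x).
rewrite dx; elim: k x dx => [|k IHk] x dx.
  by move/eqP: dx; rewrite dist_eq0 => /eqP ->.
have [z zx dz] := dist_parent dx; apply: (connect_trans (y := z)).
  by apply: connect1; rewrite /adj_on /= eqxx dz ltnSn orbT adj_sym.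
apply: connect_adj_on_sub (IHk z dz) => w /orP[wk|/eqP ->] /=.
  by apply/orP; left; lia_dist.
by rewrite dz ltnSn.
Qed.

Lemma connect_layer r a b : dist r a = dist r b ->
  connect (adj_on [pred w | [|| dist r w < dist r a, w == a | w == b]]) a b.
Proof.
move=> dab; apply: (connect_trans (y := r)).
  by apply: connect_adj_on_sub (connect_down r a) => w /orP[|] /= ->; rewrite ?orbT.
rewrite (sym_connect_sym (@adj_on_sym _)).
apply: connect_adj_on_sub (connect_down r b) => w /orP[|] /=.
  by rewrite dab => ->.
by move=> ->; rewrite !orbT.
Qed.

Hypotheses (claw_freeG : claw_free adj) (bull_freeG : bull_free adj).
Hypothesis hole_freeG : longest_induced_cycle_le3 adj.

Lemma no_claw c a b e : adj c a -> adj c b -> adj c e ->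
  ~~ adj a b -> ~~ adj a e -> ~~ adj b e -> a != b -> a != e -> b != e -> False.
Proof.
move=> ca cb ce ab ae be a_b a_e b_e; apply: claw_freeG.
apply: (@induced_sub_nth _ _ [:: c; a; b; e] c).
- by move=> i j; rewrite /claw_rel eq_sym orbC.
- by [].
- by rewrite /= !inE !negb_or a_b a_e b_e !adj_neq.
move=> [[|[|[|[|i]]]] ?] [[|[|[|[|j]]]] ?] //=;
  by rewrite /claw_rel /= ?adj_irr ?(negbTE ab) ?(negbTE ae) ?(negbTE be).
Qed.

Lemma no_bull t0 t1 t2 p3 p4 :
  adj t0 t1 -> adj t0 t2 -> adj t1 t2 -> adj t0 p3 -> adj t1 p4 ->
  ~~ adj t1 p3 -> ~~ adj t2 p3 -> ~~ adj t0 p4 -> ~~ adj t2 p4 -> ~~ adj p3 p4 ->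
  False.
Proof.
move=> t01 t02 t12 t03 t14 n13 n23 n04 n24 n34; apply: bull_freeG.
apply: (@induced_sub_nth _ _ [:: t0; t1; t2; p3; p4] t0).
- by move=> i j; rewrite /bull_rel orbC.
- by [].
- have t0p4 : t0 != p4 by apply: (adj_nadj_neq _ n24); rewrite adj_sym.
  have t1p3 : t1 != p3 by apply: (adj_nadj_neq _ n23); rewrite adj_sym.
  rewrite /= !inE !negb_or t0p4 t1p3 (adj_nadj_neq t12 n13).
  by rewrite (adj_nadj_neq t02 n04) (adj_nadj_neq t03 n04) !adj_neq.
move=> [[|[|[|[|[|i]]]]] ?] [[|[|[|[|[|j]]]]] ?] //=;
  by rewrite /bull_rel /bull_edge /= ?adj_irr ?(negbTE n13) ?(negbTE n23)
    ?(negbTE n04) ?(negbTE n24) ?(negbTE n34).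
Qed.

Lemma no_induced_C4 a b c d : adj a b -> adj b c -> adj c d -> adj d a ->
  ~~ adj a c -> ~~ adj b d -> a != c -> b != d -> False.
Proof.
move=> ab bc cd da ac bd a_c b_d; apply: (hole_freeG (leqnn 4)).
apply: (@induced_sub_nth _ _ [:: a; b; c; d] a).
- by move=> i j; rewrite /cycle_rel orbC.
- by [].
- by rewrite /= !inE !negb_or a_c b_d !adj_neq // adj_sym.
move=> [[|[|[|[|i]]]] ?] [[|[|[|[|j]]]] ?] //=;
  by rewrite /cycle_rel /= ?adj_irr ?(negbTE ac) ?(negbTE bd) // adj_sym.
Qed.

Lemma no_induced_path_above r Q m : 2 <= m -> induced_path adj Q m ->
  dist r (Q 0) = dist r (Q m) ->
  (forall i, 0 < i < m -> dist r (Q 0) < dist r (Q i)) -> False.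
Proof.
move=> m2 indQ dQ above.
set P := [pred w | [|| dist r w < dist r (Q m), w == Q m | w == Q 0]].
have [n [s [s0 sn ind_s]]] :=
  connect_induced_path (@adj_on_sym P) (@adj_on_irr P) (connect_layer (esym dQ)).
have [Q_0m Q_0m_adj] := indQ 0 m (leq0n m) (leqnn m).
have n2 : 2 <= n.
  case: n sn ind_s => [|[|n]] sn ind_s //.
    by move: Q_0m; rewrite -s0 -sn eqxx; lia_dist.
  have [_] := ind_s 0 1 isT isT; rewrite s0 sn /adj_on adj_sym Q_0m_adj.
  by move=> /= /and3P[_ _]; lia_dist.
have P_s i : i <= n -> P (s i).
  move=> i_n; case: (ltnP i n) => [i_lt_n|n_le_i].
    by have [_] := ind_s i i.+1 i_n i_lt_n; rewrite eqxx => /and3P[].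
  have [_] := ind_s i.-1 i (ltac:(lia_dist)) i_n.
  by rewrite (_ : i.-1.+1 = i) ?eqxx => [/and3P[]|]; lia_dist.
have ind_s' : induced_path adj s n.
  by move=> i j i_n j_n; have [-> <-] := ind_s i j i_n j_n; rewrite /adj_on !P_s.
apply: (hole_freeG (_ : 4 <= m + n)); first lia_dist.
apply: (induced_cycle_glue adj_sym m2 n2 indQ ind_s' s0 sn) => i k im kn.
have [sk0 _] := ind_s k 0 (ltac:(lia_dist)) (leq0n n).
have [skn _] := ind_s k n (ltac:(lia_dist)) (leqnn n).
have skm : s k != Q m by rewrite -s0 sk0; lia_dist.
have sk0' : s k != Q 0 by rewrite -sn skn; lia_dist.
have := P_s k (ltac:(lia_dist)); rewrite /= (negbTE skm) (negbTE sk0') !orbF => dsk.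
have := above i im; rewrite dQ => dQi.
split; first by apply: contraTneq dsk => <-; lia_dist.
by apply: (dist_gap_nadj (r := r)); lia_dist.
Qed.

Lemma common_upper_nbr_adj r w a b :
  adj w a -> adj w b -> dist r a = dist r b -> dist r a < dist r w ->
  a != b -> adj a b.
Proof.
move=> wa wb dab daw a_b; apply/negPn/negP => ab.
apply: (@no_induced_path_above r (nth a [:: a; w; b]) 2) => //.
- apply: (@induced_path_nth a [:: w; b]).
    by rewrite /= !inE negb_or a_b !adj_neq // adj_sym.
  move=> [|[|i]] [|[|[|j]]] //= ij.
  + by rewrite adj_sym.
  + by rewrite (negbTE ab).
  + by lia_dist.
- by move=> [|[|i]] //=; lia_dist.
Qed.

Lemma same_layer_nbrs_adj r w a b : 1 < dist r w -> adj w a -> adj w b ->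
  dist r a = dist r w -> dist r b = dist r w -> a != b -> adj a b.
Proof.
move=> dw wa wb da db a_b; apply/negPn/negP => ab.
have [x xw dx] : exists2 x, adj x w & dist r x = (dist r w).-1.
  by apply: dist_parent; lia_dist.
have [y yx dy] : exists2 y, adj y x & dist r y = (dist r w).-2.
  by apply: dist_parent; lia_dist.
have far p q : (dist r p).+1 < dist r q -> ~~ adj p q.
  by move=> pq; apply: (dist_gap_nadj (r := r)); left.
have ya := far y a (ltac:(lia_dist)); have yb := far y b (ltac:(lia_dist)).
have wy : ~~ adj w y by rewrite adj_sym far //; lia_dist.
have x_a : x != a by apply: (dist_neq (r := r)); lia_dist.
have x_b : x != b by apply: (dist_neq (r := r)); lia_dist.
have y_a : y != a by apply: (dist_neq (r := r)); lia_dist.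
have y_b : y != b by apply: (dist_neq (r := r)); lia_dist.
have xy : adj x y by rewrite adj_sym.
have wx : adj w x by rewrite adj_sym.
case: (boolP (adj x a)) => xa; case: (boolP (adj x b)) => xb.
- exact: (no_claw xy xa xb ya yb ab).
- by apply: (no_bull xw xa wa xy wb wy _ xb ab yb); rewrite adj_sym.
- by apply: (no_bull xw xb wb xy wa wy _ xa _ ya); rewrite adj_sym.
- exact: (no_claw wx wa wb xa xb ab).
Qed.

Lemma upper_nbrs_adj r x y z : 0 < dist r x -> adj x y -> adj x z ->
  dist r y = (dist r x).+1 -> dist r z = (dist r x).+1 -> y != z -> adj y z.
Proof.
move=> dx xy xz dy dz y_z; apply/negPn/negP => yz.
have [w wx dw] : exists2 w, adj w x & dist r w = (dist r x).-1.
  by apply: dist_parent; lia_dist.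
have [wy wz] : ~~ adj w y /\ ~~ adj w z.
  by split; apply: (dist_gap_nadj (r := r)); lia_dist.
have [w_y w_z] : w != y /\ w != z by split; apply: (dist_neq (r := r)); lia_dist.
by apply: (no_claw _ xy xz wy wz yz w_y w_z y_z); rewrite adj_sym.
Qed.

Lemma exists_dist_ge2 u : 3 <= alpha adj -> exists y, 1 < dist u y.
Proof.
move=> /stable_triple[x [y [z [xy yz zx /and3P[nxy nyz nzx]]]]].
case: (boolP [exists y, 1 < dist u y]) => [/existsP//|]; rewrite negb_exists.
move=> /forallP near; exfalso; have {}near w : w != u -> adj u w.
  move=> wu; rewrite -dist_eq1; have := near w; have := dist_eq0 u w.
  by rewrite (negbTE wu); lia_dist.
have [xu|xu] := eqVneq x u; first by move: nxy; rewrite xu near // eq_sym -xu.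
have [yu|yu] := eqVneq y u; first by move: nyz; rewrite yu near // eq_sym -yu.
have [zu|zu] := eqVneq z u; first by move: nzx; rewrite zu near // eq_sym -zu.
apply: (no_claw (near x xu) (near y yu) (near z zu) nxy _ nyz xy _ yz).
  by rewrite adj_sym.
by rewrite eq_sym.
Qed.

Lemma farthest_closed_nbr_proper u v x y : (forall z, dist u z <= dist u v) ->
  1 < dist u v -> adj v x -> adj v y -> (dist u x).+1 = dist u v ->
  dist u y = dist u v -> ~~ adj x y -> closed_nbr y \proper closed_nbr v.
Proof.
move=> ecc_u dv vx vy dx dy xy; have x_y : x != y by apply: (dist_neq (r := u)); lia_dist.
rewrite properE; apply/andP; split; last first.
  by apply/subsetPn; exists x; rewrite !inE ?vx ?orbT // negb_or x_y adj_sym.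
apply/subsetP => z; rewrite !inE => /orP[/eqP ->|yz]; first by rewrite vy orbT.
have [->|zv] := eqVneq z v; first by [].
apply/orP; right.
have [dz|dz] : dist u z = dist u v \/ (dist u z).+1 = dist u v.
  by have := dist_adj_close u yz; have := ecc_u z; lia_dist.
  by apply: (same_layer_nbrs_adj (r := u) _ _ yz); rewrite ?dy // 1?adj_sym // eq_sym.
apply/negPn/negP => vz.
have [xz|xz] := boolP (adj x z).
  by apply: (@no_induced_C4 x v y z); rewrite // 1?adj_sym // eq_sym.
apply: (@no_induced_path_above u (nth x [:: x; v; y; z]) 3) => //=; last first.
- by move=> [|[|[|i]]] //=; lia_dist.
- by lia_dist.
apply: (@induced_path_nth x [:: v; y; z]).
  rewrite /= !inE !negb_or x_y (adj_nadj_neq vx vz) (eq_sym v z) zv.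
  by rewrite !adj_neq // adj_sym.
move=> [|[|[|i]]] [|[|[|[|j]]]] //= ij;
  by rewrite ?(negbTE xy) ?(negbTE xz) ?(negbTE vz) // 1?adj_sym //; lia_dist.
Qed.

Definition simplicial v := forall a b, adj v a -> adj v b -> a != b -> adj a b.

Lemma simplicial_exists : 3 <= alpha adj -> exists v, simplicial v.
Proof.
move=> alpha3; have [u _] := stable_triple alpha3.
have [y0 dy0] := exists_dist_ge2 u alpha3.
have [w _ ecc_w] := @arg_maxnP T u xpredT (dist u) isT.
have [v /eqP dv min_v] := @arg_minnP T w (fun y => dist u y == dist u w)
  (fun y => #|closed_nbr y|) (eqxx _).
have ecc_v z : dist u z <= dist u v by rewrite dv; exact: ecc_w.
have D_gt1 : 1 < dist u v by have := ecc_v y0; lia_dist.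
have mixed x y : adj v x -> adj v y -> (dist u x).+1 = dist u v ->
    dist u y = dist u v -> ~~ adj x y -> False.
  move=> vx vy dx dy xy.
  have := proper_card (farthest_closed_nbr_proper ecc_v D_gt1 vx vy dx dy xy).
  by rewrite ltnNge min_v ?dy ?dv.
exists v => a b va vb a_b; apply/negPn/negP => ab.
have near z : adj v z -> dist u z = dist u v \/ (dist u z).+1 = dist u v.
  by move=> vz; have := dist_adj_close u vz; have := ecc_v z; lia_dist.
case: (near a va) (near b vb) => [da|da] [db|db].
- by rewrite (same_layer_nbrs_adj (r := u) _ va vb da db a_b) in ab.
- by apply: (mixed b a) => //; rewrite adj_sym.
- exact: (mixed a b).
- move: ab; rewrite (common_upper_nbr_adj (r := u) va vb _ _ a_b) //; lia_dist.
Qed.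

Section SimplicialLayers.
Variable v : T.
Hypothesis simplicial_v : simplicial v.
Local Notation d := (dist v).

Definition clique_layer k := forall a b, d a = k -> d b = k -> a != b -> adj a b.

Lemma common_parent k a a' : clique_layer k ->
  d a = k.+1 -> d a' = k.+1 -> adj a a' -> exists2 w, d w = k & adj w a && adj w a'.
Proof.
move=> clique_k da da' aa'.
have [q qa dq] := dist_parent da; have [q' q'a' dq'] := dist_parent da'.
have [qa'|nqa'] := boolP (adj q a'); first by exists q; rewrite // qa.
have [q'a|nq'a] := boolP (adj q' a); first by exists q'; rewrite // q'a.
have q_q' : q != q' by apply: contraNneq nqa' => ->.
exfalso; apply: (@no_induced_C4 q a a' q') => //.
- by rewrite adj_sym.
- by rewrite adj_sym clique_k.
- by rewrite adj_sym.
- by apply: (dist_neq (r := v)); lia_dist.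
- by apply: (dist_neq (r := v)); lia_dist.
Qed.

Lemma layer_clique k : clique_layer k.
Proof.
suff: clique_layer k /\ clique_layer k.+1 by case.
elim: k => [|k [clique_k clique_k1]].
  split=> a b da db a_b; last by apply: simplicial_v => //; rewrite -dist_eq1 ?da ?db.
  move: a_b; move/eqP: da; move/eqP: db.
  by rewrite !dist_eq0 => /eqP -> /eqP ->; rewrite eqxx.
split=> // b c db dc b_c; apply/negPn/negP => bc.
have [a ab da] := dist_parent db; have [a' a'c da'] := dist_parent dc.
have up x y z : d x = k.+1 -> adj x y -> adj x z -> d y = k.+2 -> d z = k.+2 ->
    y != z -> adj y z.
  by move=> dx xy xz dy dz; apply: (upper_nbrs_adj (r := v) _ xy xz); rewrite ?dx.
have [ac|nac] := boolP (adj a c); first by rewrite (up a b c) in bc.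
have [a'b|na'b] := boolP (adj a' b); first by rewrite (up a' b c) in bc.
have a_a' : a != a' by apply: contraNneq na'b => <-.
have aa' := clique_k1 _ _ da da' a_a'.
have [w dw /andP[wa wa']] := common_parent clique_k da da' aa'.
have [wb wc] : ~~ adj w b /\ ~~ adj w c.
  by split; apply: (dist_gap_nadj (r := v)); lia_dist.
by apply: (no_bull aa' _ _ ab a'c na'b wb nac wc bc); rewrite adj_sym.
Qed.

Lemma layer_complete_next k a b : d a = k.+2 -> d b = k.+3 -> adj a b.
Proof.
move=> da db; apply/negPn/negP => ab.
have [a' a'b da'] := dist_parent db.
have a_a' : a != a' by apply: contraNneq ab => ->.
have aa' := layer_clique da da' a_a'.
have [w dw /andP[wa wa']] := common_parent (@layer_clique k.+1) da da' aa'.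
have [x xw dx] := dist_parent dw.
have [a'x ax] : ~~ adj a' x /\ ~~ adj a x.
  by split; apply: (dist_gap_nadj (r := v)); lia_dist.
have [wb xb] : ~~ adj w b /\ ~~ adj x b.
  by split; apply: (dist_gap_nadj (r := v)); lia_dist.
by apply: (no_bull wa' wa _ _ a'b a'x ax wb ab xb); rewrite adj_sym.
Qed.

Lemma low_layers_adj p q : d p <= d q <= 3 -> (d p < 2) = (d q < 2) -> p != q ->
  adj p q.
Proof.
move=> /andP[pq q3] same p_q; have [dpq|dpq] := eqVneq (d p) (d q).
  exact: layer_clique.
have [[dp dq]|[dp dq]] : d p = 0 /\ d q = 1 \/ d p = 2 /\ d q = 3 by lia_dist.
  by move/eqP: dp; rewrite dist_eq0 => /eqP ->; rewrite -dist_eq1 dq.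
exact: (layer_complete_next (k := 0)).
Qed.

Hypothesis alpha_ge3 : 3 <= alpha adj.

Lemma exists_layer4 : exists s, d s = 4.
Proof.
suff [s ds] : exists s, 3 < d s by apply: (dist_layer_exists (s := s)); lia_dist.
case: (boolP [exists s, 3 < d s]) => [/existsP//|].
rewrite negb_exists => /forallP low; exfalso.
have [x [y [z [xy yz zx /and3P[nxy nyz nzx]]]]] := stable_triple alpha_ge3.
have block p q : p != q -> ~~ adj p q -> (d p < 2) != (d q < 2).
  move=> p_q; apply: contraNneq => same; have := low p; have := low q.
  case: (leqP (d p) (d q)) => [pq|/ltnW qp] q3 p3.
    by apply: low_layers_adj; rewrite // pq; lia_dist.
  by rewrite adj_sym; apply: low_layers_adj; rewrite // 1?eq_sym // qp; lia_dist.
move: (block x y xy nxy) (block y z yz nyz) (block z x zx nzx).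
by case: (d x < 2); case: (d y < 2); case: (d z < 2).
Qed.

Definition twin x := closed_nbr x == closed_nbr v.

Lemma twin_v : twin v.
Proof. exact: eqxx. Qed.

Lemma twin_adj x y : twin x -> x != y -> adj x y = (y == v) || adj v y.
Proof.
by move=> /eqP/setP/(_ y); rewrite !inE eq_sym => <- /negbTE ->.
Qed.

Lemma twin_dist x : twin x -> d x <= 1.
Proof.
move=> /eqP/setP/(_ x); rewrite !inE eqxx eq_sym => /esym/orP[/eqP <-|vx].
  by have := dist_eq0 v v; rewrite eqxx; lia_dist.
by rewrite -dist_eq1 in vx; lia_dist.
Qed.

Lemma closed_nbr_simplicial_sub a : adj v a -> closed_nbr v \subset closed_nbr a.
Proof.
move=> va; apply/subsetP => z; rewrite !inE => /orP[/eqP ->|vz].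
  by rewrite adj_sym va orbT.
by have [//|z_a] := eqVneq z a; rewrite simplicial_v // eq_sym.
Qed.

Lemma nontwin_layer1_complete a b : d a = 1 -> ~~ twin a -> d b = 2 -> adj a b.
Proof.
move=> da nta db; apply/negPn/negP => ab.
have va : adj v a by rewrite -dist_eq1 da.
have /properP[_ [c]] : closed_nbr v \proper closed_nbr a.
  by rewrite properEneq eq_sym nta closed_nbr_simplicial_sub.
rewrite !inE negb_or => /orP[/eqP -> /andP[_]|ac /andP[c_v vc]]; first by rewrite va.
have dc : d c = 2.
  have := dist_adj_close v ac; have := dist_eq0 v c; have := dist_eq1 v c.
  by rewrite (negbTE c_v) (negbTE vc) da; lia_dist.
have bc : adj b c by apply: layer_clique; rewrite ?db //; apply: contraNneq ab => ->.
have [s ds] := exists_layer4; have [t ts dt] := dist_parent ds.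
have bt := layer_complete_next (k := 0) db dt.
have ct := layer_complete_next (k := 0) dc dt.
have [ta cs] : ~~ adj t a /\ ~~ adj c s.
  by split; apply: (dist_gap_nadj (r := v)); lia_dist.
have [bs a_s] : ~~ adj b s /\ ~~ adj a s.
  by split; apply: (dist_gap_nadj (r := v)); lia_dist.
by apply: (no_bull ct _ _ _ ts ta _ cs bs a_s); rewrite // adj_sym.
Qed.

Lemma nontwin_adj_next x y : ~~ twin x -> d y = (d x).+1 -> adj x y.
Proof.
move=> ntx; case dx: (d x) => [|[|k]] dy.
- by move/eqP: dx ntx; rewrite dist_eq0 => /eqP ->; rewrite twin_v.
- exact: nontwin_layer1_complete.
- exact: layer_complete_next dy.
Qed.

Definition layer_index x := if twin x then 0 else d x.

Lemma adj_layer_index x y : x != y ->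
  adj x y = [|| layer_index x == layer_index y, (layer_index x).+1 == layer_index y
              | (layer_index y).+1 == layer_index x].
Proof.
move=> x_y; rewrite /layer_index.
have nontwin_neq z : ~~ twin z -> z != v by apply: contraNneq => ->; exact: twin_v.
have [tx|ntx] := boolP (twin x); have [ty|nty] := boolP (twin y).
- by rewrite (twin_adj tx x_y); move/eqP/setP/(_ y): ty; rewrite !inE eqxx => <-.
- have y_v := nontwin_neq y nty; have := dist_eq0 v y.
  by rewrite (twin_adj tx x_y) (negbTE y_v) -dist_eq1; lia_dist.
- have x_v := nontwin_neq x ntx; have := dist_eq0 v x.
  by rewrite adj_sym (twin_adj ty) 1?eq_sym // (negbTE x_v) -dist_eq1; lia_dist.
have [dxy|dxy] := eqVneq (d x) (d y); first by rewrite (layer_clique dxy (erefl _) x_y).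
have [dxy1|dxy1] := eqVneq (d x).+1 (d y); first by rewrite nontwin_adj_next // orbT.
have [dyx1|dyx1] := eqVneq (d y).+1 (d x).
  by rewrite adj_sym nontwin_adj_next // !orbT.
by rewrite (negbTE (dist_gap_nadj (r := v) _)); lia_dist.
Qed.

Lemma layer_index_le_ecc x : layer_index x <= \max_y d y.
Proof. by rewrite /layer_index; case: ifP => _ //; exact: leq_bigmax. Qed.

Lemma layer_index_onto k : k <= \max_y d y -> exists x, layer_index x = k.
Proof.
case: k => [|[|k]] k_ecc; first by exists v; rewrite /layer_index twin_v.
  have [s ds] := exists_layer4.
  have [y dy] := @dist_layer_exists v s 2 (ltac:(by rewrite ds)).
  have [x xy dx] := dist_parent dy; exists x; rewrite /layer_index -dx ifN //.
  apply/negP => /twin_adj /(_ (adj_neq xy)); rewrite xy -dist_eq1 dy.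
  by rewrite -dist_eq0 dy.
have [w ecc_w] : {w | \max_y d y = d w} by apply: eq_bigmax; apply/card_gt0P; exists v.
have [y dy] := @dist_layer_exists v w k.+2 (ltac:(by rewrite -ecc_w)).
by exists y; rewrite /layer_index ifN ?dy //; apply/negP => /twin_dist; rewrite dy.
Qed.

Lemma layer_expansion : expansion_of adj (@path_rel (\max_y d y).+1).
Proof.
have lt_ecc x : layer_index x < (\max_y d y).+1 by rewrite ltnS layer_index_le_ecc.
exists (fun x => inord (layer_index x)); split.
  move=> k; have [x xk] := @layer_index_onto k (ltac:(by rewrite -ltnS)).
  by exists x; apply/val_inj; rewrite /= inordK // xk.
move=> x y; rewrite /path_rel -(inj_eq val_inj) /= !inordK //.
by have [->|x_y] := eqVneq x y; [rewrite adj_irr | exact: adj_layer_index].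
Qed.

Lemma diam_ge4 : 4 <= diam adj.
Proof.
have [s <-] := exists_layer4.
exact: leq_trans (leq_bigmax s) (leq_bigmax (F := fun x => \max_y dist x y) v).
Qed.

End SimplicialLayers.

Lemma diam_ge4_and_path_expansion : 3 <= alpha adj ->
  4 <= diam adj /\ exists n, expansion_of adj (@path_rel n).
Proof.
move=> alpha_ge3; have [v simplicial_v] := simplicial_exists alpha_ge3.
split; first exact: diam_ge4 simplicial_v alpha_ge3.
by eexists; apply: layer_expansion simplicial_v alpha_ge3.
Qed.

End SimpleGraph.

Theorem lemma7 (T : finType) (adj : rel T) :
  simple_graph adj -> connected_graph adj ->
  claw_free adj -> bull_free adj -> longest_induced_cycle_le3 adj ->
  3 <= alpha adj ->
  4 <= diam adj /\ exists n : nat, expansion_of adj (@path_rel n).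
Proof.
by case=> adj_sym adj_irr *; apply: diam_ge4_and_path_expansion.
Qed.
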